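(* Let $n$ and $k$ be integers with $1\le k<n/2$. If $A(n,k)\neq B(n,k)$, then $R_j=S_j=T_j$ for all $j\ge3$.
   Context: $\mathrm{DGP}(n,k)$ is the graph with vertex set $\{(u_i,j),(v_i,j): 0\le i\le n-1,\ j\in\{0,1\}\}$ and edges $\{(u_i,j),(u_{i+1},1-j)\}$ (outer edges), $\{(u_i,j),(v_i,1-j)\}$ (spokes, forming the set $\mathcal{S}$), $\{(v_i,j),(v_{i+k},1-j)\}$ (inner edges), subscripts mod $n$ (the canonical double cover of $\mathrm{GP}(n,k)$). $A(n,k)=\mathrm{Aut}(\mathrm{DGP}(n,k))$ and $B(n,k)$ is the setwise stabilizer of $\mathcal{S}$ in $A(n,k)$. For a cycle $C$, $r(C),s(C),t(C)$ are its numbers of outer edges, spokes and inner edges. For $j\ge3$, $\mathcal{C}_j$ is the set of $j$-cycles of $\mathrm{DGP}(n,k)$, and $R_j=\sum_{C\in\mathcal{C}_j}r(C)$, $S_j=\sum_{C\in\mathcal{C}_j}s(C)$, $T_j=\sum_{C\in\mathcal{C}_j}t(C)$. *)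

From mathcomp Require Import all_boot all_fingroup.
Set Implicit Arguments. Unset Strict Implicit. Unset Printing Implicit Defensive.

(* Vertices of DGP(n,k): (b, i, j) with b = true for u_i, b = false for v_i,
   i : 'I_n the subscript, j : bool the layer (j = true encodes 1). *)
Definition V (n : nat) : finType := (bool * 'I_n * bool)%type.

Definition vkind n (x : V n) : bool := x.1.1.
Definition vidx n (x : V n) : nat := val x.1.2.
Definition vlay n (x : V n) : bool := x.2.

Definition outer_adj n (x y : V n) : bool :=
  [&& vkind x, vkind y, vlay y == ~~ vlay x &
      (vidx y == (vidx x + 1) %% n) || (vidx x == (vidx y + 1) %% n)].

Definition spoke_adj n (x y : V n) : bool :=
  [&& vkind x != vkind y, vidx x == vidx y & vlay y == ~~ vlay x].

Definition inner_adj n k (x y : V n) : bool :=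
  [&& ~~ vkind x, ~~ vkind y, vlay y == ~~ vlay x &
      (vidx y == (vidx x + k) %% n) || (vidx x == (vidx y + k) %% n)].

Definition dgp_adj n k (x y : V n) : bool :=
  [|| outer_adj x y, spoke_adj x y | inner_adj k x y].

Definition is_outer_edge n (e : {set V n}) : bool :=
  [exists x, exists y, (e == [set x; y]) && outer_adj x y].
Definition is_spoke n (e : {set V n}) : bool :=
  [exists x, exists y, (e == [set x; y]) && spoke_adj x y].
Definition is_inner_edge n k (e : {set V n}) : bool :=
  [exists x, exists y, (e == [set x; y]) && inner_adj k x y].

Definition Aut_DGP n k : {set {perm V n}} :=
  [set p : {perm V n} | [forall x, forall y, dgp_adj k (p x) (p y) == dgp_adj k x y]].

Definition B_DGP n k : {set {perm V n}} :=
  [set p in Aut_DGP n k |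
     [forall e : {set V n}, is_spoke (p @: e) == is_spoke e]].

Definition cycle_edges n j (t : j.-tuple (V n)) : {set {set V n}} :=
  [set [set tnth t i; nth (tnth t i) t (i.+1 %% j)] | i : 'I_j].

Definition is_cycle_tuple n k j (t : j.-tuple (V n)) : bool :=
  uniq t && [forall i : 'I_j, dgp_adj k (tnth t i) (nth (tnth t i) t (i.+1 %% j))].

Definition cycles n k j : {set {set {set V n}}} :=
  [set C | [exists t : j.-tuple (V n), is_cycle_tuple k t && (C == cycle_edges t)]].

Definition r_of n (C : {set {set V n}}) : nat := #|[set e in C | is_outer_edge e]|.
Definition s_of n (C : {set {set V n}}) : nat := #|[set e in C | is_spoke e]|.
Definition t_of n k (C : {set {set V n}}) : nat := #|[set e in C | is_inner_edge k e]|.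

Definition R_ n k j : nat := \sum_(C in cycles n k j) r_of C.
Definition S_ n k j : nat := \sum_(C in cycles n k j) s_of C.
Definition T_ n k j : nat := \sum_(C in cycles n k j) t_of k C.

From mathcomp Require Import all_boot all_fingroup.
Set Implicit Arguments. Unset Strict Implicit. Unset Printing Implicit Defensive.

(* Rotations i |-> i + m and the layer swap are automorphisms of DGP(n,k) acting
   transitively on each of the three edge classes (outer edges, spokes, inner
   edges), so the number of j-cycles through an edge depends only on its class:
   call these numbers c_O, c_S, c_I.  Since 2k < n each class has exactly 2n
   edges, and double counting gives R_j = 2n c_O, S_j = 2n c_S, T_j = 2n c_I.
   An automorphism p that does not stabilise the spokes maps some spoke uv onto
   an outer edge or an inner edge, and automorphisms preserve cycle counts.  In
   the first case c_S = c_O, and p(v) is an outer vertex, so the inner edge at v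
   is mapped to an outer edge or a spoke, whence c_I = c_O too; the second case
   is symmetric, following the outer edge at u. *)

Lemma sum_card_incidence (T : finType) (A : {set {set T}}) (P : pred T) :
  \sum_(C in A) #|[set e in C | P e]| = \sum_(e | P e) #|[set C in A | e \in C]|.
Proof.
transitivity (\sum_(C in A) \sum_(e | P e) (e \in C : nat)).
  apply: eq_bigr => C _; rewrite -sum1_card big_mkcond [RHS]big_mkcond.
  by apply: eq_bigr => e _; rewrite inE andbC; case: (P e); case: (e \in C).
rewrite exchange_big; apply: eq_bigr => e _.
rewrite -sum1_card big_mkcond [RHS]big_mkcond.
by apply: eq_bigr => C _; rewrite inE; case: (C \in A); case: (e \in C).
Qed.

Lemma sum_range_inj (I T : finType) (h : I -> T) (P : pred T) (F : T -> nat) :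
  injective h -> (forall e, P e = [exists i, e == h i]) ->
  \sum_(e | P e) F e = \sum_i F (h i).
Proof.
move=> h_inj hP; rewrite (eq_bigl (mem (h @: setT))); last first.
  by move=> e; rewrite hP; apply/existsP/imsetP => [[i /eqP ->] | [i _ ->]]; exists i.
rewrite big_imset => [|i i' _ _ /h_inj //].
by apply: eq_bigl => i; rewrite inE.
Qed.

Lemma imset_set2 (T U : finType) (g : T -> U) (a b : T) :
  g @: [set a; b] = [set g a; g b].
Proof. by rewrite imsetU1 imset_set1. Qed.

Lemma imset_permK (T : finType) (p : {perm T}) (A : {set T}) : p^-1%g @: (p @: A) = A.
Proof. by rewrite -imset_comp (eq_imset _ (permK p)) imset_id. Qed.

Definition ncycles_through n k j (e : {set V n}) : nat :=
  #|[set C in cycles n k j | e \in C]|.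

Section CyclesThroughEdges.

Variables n k j : nat.

Lemma cycles_imset (g : V n -> V n) (C : {set {set V n}}) :
  injective g -> {homo g : x y / dgp_adj k x y} ->
  C \in cycles n k j -> [set g @: e | e : {set V n} in C] \in cycles n k j.
Proof.
move=> g_inj g_adj; rewrite !inE => /existsP [t].
case/andP => /andP [t_uniq /forallP t_adj] /eqP ->; apply/existsP; exists (map_tuple g t).
have nth_succ (i : 'I_j) :
    nth (g (tnth t i)) (map g t) (i.+1 %% j) = g (nth (tnth t i) t (i.+1 %% j)).
  by rewrite (nth_map (tnth t i)) // size_tuple ltn_pmod // (leq_ltn_trans _ (ltn_ord i)).
rewrite /is_cycle_tuple map_inj_uniq // t_uniq /=; apply/andP; split.
  by apply/forallP => i; rewrite tnth_map nth_succ; apply/g_adj/t_adj.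
rewrite /cycle_edges -imset_comp; apply/eqP/eq_imset => i /=.
by rewrite imset_set2 tnth_map -nth_succ.
Qed.

Lemma ncycles_through_homo (g : V n -> V n) (e : {set V n}) :
  injective g -> {homo g : x y / dgp_adj k x y} ->
  ncycles_through k j e <= ncycles_through k j (g @: e).
Proof.
move=> g_inj g_adj; set gC := fun C : {set {set V n}} => [set g @: f | f : {set V n} in C].
have gC_inj : injective gC by do 2 apply: imset_inj.
rewrite /ncycles_through -(card_imset _ gC_inj).
apply/subset_leq_card/subsetP => ? /imsetP [C].
rewrite inE => /andP [Ccyc eC] ->.
by rewrite inE cycles_imset //= imset_f.
Qed.

Lemma Aut_DGP_adj (p : {perm V n}) x y :
  p \in Aut_DGP n k -> dgp_adj k (p x) (p y) = dgp_adj k x y.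
Proof. by rewrite inE => /forallP /(_ x) /forallP /(_ y) /eqP. Qed.

Lemma Aut_DGP_inv (p : {perm V n}) : p \in Aut_DGP n k -> p^-1%g \in Aut_DGP n k.
Proof.
move=> pA; rewrite inE; apply/forallP => x; apply/forallP => y.
by rewrite -(Aut_DGP_adj _ _ pA) !permKV.
Qed.

Lemma ncycles_through_aut (p : {perm V n}) (e : {set V n}) :
  p \in Aut_DGP n k -> ncycles_through k j (p @: e) = ncycles_through k j e.
Proof.
have homo q : q \in Aut_DGP n k -> {homo q : x y / dgp_adj k x y}.
  by move=> qA x y; rewrite Aut_DGP_adj.
move=> pA; apply/eqP; rewrite eqn_leq; apply/andP; split.
  rewrite -[in X in _ <= X](imset_permK p e).
  by apply: ncycles_through_homo; [exact: perm_inj | exact/homo/Aut_DGP_inv].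
by apply: ncycles_through_homo; [exact: perm_inj | exact: homo].
Qed.

End CyclesThroughEdges.

Lemma Aut_DGP_moves_spoke n k :
  Aut_DGP n k != B_DGP n k ->
  exists2 p, p \in Aut_DGP n k & exists2 e, is_spoke e & ~~ is_spoke (p @: e).
Proof.
have B_sub_A : B_DGP n k \subset Aut_DGP n k by apply/subsetP => p; rewrite inE => /andP [].
rewrite eqEsubset B_sub_A andbT => /subsetPn [p pA].
rewrite inE pA /= => /forallPn [e]; case spoke_e: (is_spoke e) => /=.
  by rewrite eqb_id => not_spoke; exists p => //; exists e.
rewrite eqbF_neg negbK => spoke_pe; exists p^-1%g; first exact: Aut_DGP_inv.
by exists (p @: e); rewrite // imset_permK spoke_e.
Qed.

Lemma eqn_modDr_small M a b m d : a < M ->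
  ((a + m) %% M == ((b + m) %% M + d) %% M) = (a == (b + d) %% M).
Proof. by move=> aM; rewrite modnDml addnAC eqn_modDr (modn_small aM). Qed.

Lemma eqn_modDr_ord M (a b : 'I_M) m : ((a + m) %% M == (b + m) %% M) = (a == b).
Proof. by rewrite eqn_modDr !modn_small. Qed.

Section EdgeClasses.

Variable N : nat.
Local Notation n := N.+1.

Definition shift (i : 'I_n) (d : nat) : 'I_n := inord ((i + d) %% n).

Lemma shiftE (i : 'I_n) d : val (shift i d) = (i + d) %% n.
Proof. by rewrite /= inordK // ltn_pmod. Qed.

Lemma shift0 (i : 'I_n) : shift i 0 = i.
Proof. by apply: val_inj; rewrite shiftE addn0 modn_small. Qed.

Lemma shift_ord0 (i : 'I_n) : shift ord0 i = i.
Proof. by apply: val_inj; rewrite shiftE add0n modn_small. Qed.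

Lemma shiftAC (i : 'I_n) d m : shift (shift i d) m = shift (shift i m) d.
Proof. by apply: val_inj; rewrite !shiftE !modnDml addnAC. Qed.

Definition rot_fun (m : 'I_n) (s : bool) (x : V n) : V n :=
  (x.1.1, shift x.1.2 m, x.2 (+) s).

Lemma rot_fun_inj m s : injective (rot_fun m s).
Proof.
move=> [[b i] l] [[b' i'] l'] [-> /(congr1 val) /eqP + /addIb ->].
by rewrite !shiftE eqn_modDr_ord => /eqP ->.
Qed.

Definition rot m s : {perm V n} := perm (@rot_fun_inj m s).

Lemma rot_aut k m s : rot m s \in Aut_DGP n k.
Proof.
rewrite inE; apply/forallP => -[[b i] l]; apply/forallP => -[[b' i'] l']; apply/eqP.
rewrite !permE /dgp_adj /outer_adj /spoke_adj /inner_adj /vkind /vidx /vlay /=.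
have -> : (l' (+) s == ~~ (l (+) s)) = (l' == ~~ l) by case: l; case: l'; case: s.
by rewrite !shiftE !eqn_modDr_small // eqn_modDr_ord.
Qed.

Definition edge (b b' : bool) (d : nat) (p : 'I_n * bool) : {set V n} :=
  [set (b, p.1, p.2); (b', shift p.1 d, ~~ p.2)].

Lemma rot_edge b b' d p : rot p.1 p.2 @: edge b b' d (ord0, false) = edge b b' d p.
Proof.
rewrite imset_set2 !permE /rot_fun /= shiftAC !shift_ord0.
by case: p => i [].
Qed.

Lemma ncycles_through_edge k j b b' d p :
  ncycles_through k j (edge b b' d p) = ncycles_through k j (edge b b' d (ord0, false)).
Proof. by rewrite -rot_edge ncycles_through_aut // rot_aut. Qed.

Definition edge_of (A : rel (V n)) (e : {set V n}) : bool :=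
  [exists x, exists y, (e == [set x; y]) && A x y].

Lemma edge_of_set2 (A : rel (V n)) x y : A x y -> edge_of A [set x; y].
Proof. by move=> Axy; apply/existsP; exists x; apply/existsP; exists y; rewrite eqxx. Qed.

Lemma eq_edge_of (A A' : rel (V n)) : A =2 A' -> edge_of A =1 edge_of A'.
Proof. by move=> AA' e; apply: eq_existsb => x; apply: eq_existsb => y; rewrite AA'. Qed.

Definition circulant_adj (b : bool) (d : nat) (x y : V n) : bool :=
  [&& vkind x == b, vkind y == b, vlay y == ~~ vlay x &
      (vidx y == (vidx x + d) %% n) || (vidx x == (vidx y + d) %% n)].

Lemma edge_of_circulant b d e :
  edge_of (circulant_adj b d) e = [exists p, e == edge b b d p].
Proof.
apply/idP/existsP => [|[[i l] /eqP ->]]; last first.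
  by apply: edge_of_set2; rewrite /circulant_adj /vidx /= shiftE !eqxx.
case/existsP => -[[b1 i] l] /existsP [[[b2 i'] l']] /andP [/eqP ->].
rewrite /circulant_adj /vkind /vidx /vlay /= => /and4P [/eqP -> /eqP -> /eqP ->].
case/orP => /eqP i_d.
  exists (i, l); rewrite /edge /=; apply/eqP.
  by congr [set _; (_, _, _)]; apply: val_inj; rewrite shiftE.
exists (i', ~~ l); rewrite /edge /= negbK setUC; apply/eqP.
by congr [set _; (_, _, _)]; apply: val_inj; rewrite shiftE.
Qed.

Lemma is_outer_edgeE e : is_outer_edge e = [exists p, e == edge true true 1 p].
Proof.
rewrite -edge_of_circulant; apply: eq_edge_of => x y.
by rewrite /outer_adj /circulant_adj !eqb_id.
Qed.

Lemma is_inner_edgeE k e : is_inner_edge k e = [exists p, e == edge false false k p].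
Proof.
rewrite -edge_of_circulant; apply: eq_edge_of => x y.
by rewrite /inner_adj /circulant_adj !eqbF_neg.
Qed.

Lemma is_spokeE e : is_spoke e = [exists p, e == edge true false 0 p].
Proof.
apply/idP/existsP => [|[[i l] /eqP ->]]; last first.
  by apply: (@edge_of_set2 (@spoke_adj n)); rewrite /spoke_adj /vidx /= shift0 !eqxx.
case/existsP => -[[b i] l] /existsP [[[b' i'] l']] /andP [/eqP ->].
rewrite /spoke_adj /vkind /vidx /vlay /= => /and3P [b_b' /eqP/val_inj <- /eqP ->].
case: b b_b'; case: b' => // _; [exists (i, l) | exists (i, ~~ l)];
  by rewrite /edge /= shift0 ?negbK 1?setUC.
Qed.

(* For b = b' and n %| 2d, the edges at (i, l) and at (i + d, ~~ l) coincide. *)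
Lemma edge_inj b b' d : (b != b') || ~~ (n %| d.*2) -> injective (edge b b' d).
Proof.
move=> nondeg [i l] [i' l'] e_eq.
have : (b, i, l) \in edge b b' d (i', l') by rewrite -e_eq !inE eqxx.
rewrite !inE /= => /orP [/eqP [-> ->] // | /eqP [b_b' i_d l_l']].
have : (b', shift i d, ~~ l) \in edge b b' d (i', l') by rewrite -e_eq !inE eqxx orbT.
rewrite !inE /= => /orP [/eqP [_ i'_d _] | /eqP [_ /negb_inj]]; last by rewrite l_l'; case: (l').
have : i' + 0 = i' + d.*2 %[mod n].
  by rewrite addn0 (modn_small (ltn_ord i')) -{1}i'_d i_d !shiftE modnDml -addnA addnn.
move/eqP; rewrite eqn_modDl mod0n eq_sym => n_dvd_2d.
by move: nondeg; rewrite b_b' eqxx /dvdn n_dvd_2d.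
Qed.

Section ClassCounts.

Variables k j : nat.

Local Notation ncyc := (@ncycles_through n k j).
Local Notation c_outer := (ncyc (edge true true 1 (ord0, false))).
Local Notation c_spoke := (ncyc (edge true false 0 (ord0, false))).
Local Notation c_inner := (ncyc (edge false false k (ord0, false))).

Lemma ncycles_through_class (A : rel (V n)) b b' d x y :
  (forall e, edge_of A e = [exists p, e == edge b b' d p]) -> A x y ->
  ncyc [set x; y] = ncyc (edge b b' d (ord0, false)).
Proof.
by move=> AE /edge_of_set2; rewrite AE => /existsP [p /eqP ->]; apply: ncycles_through_edge.
Qed.

Lemma ncycles_through_at_outer_vertex x y :
  dgp_adj k x y -> vkind x -> ncyc [set x; y] \in [:: c_outer; c_spoke].
Proof.
case/or3P => [xy _ | xy _ | /and4P [/negP kx _ _ _] /kx //]; rewrite !inE.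
  by rewrite (ncycles_through_class is_outer_edgeE xy) eqxx.
by rewrite (ncycles_through_class is_spokeE xy) eqxx orbT.
Qed.

Lemma ncycles_through_at_inner_vertex x y :
  dgp_adj k x y -> ~~ vkind x -> ncyc [set x; y] \in [:: c_spoke; c_inner].
Proof.
case/or3P => [/and4P [kx _ _ _] /negP // | xy _ | xy _]; rewrite !inE.
  by rewrite (ncycles_through_class is_spokeE xy) eqxx.
by rewrite (ncycles_through_class (is_inner_edgeE k) xy) eqxx orbT.
Qed.

Lemma class_counts_eq_of_moved_spoke (p : {perm V n}) e :
  p \in Aut_DGP n k -> is_spoke e -> ~~ is_spoke (p @: e) ->
  c_outer = c_spoke /\ c_spoke = c_inner.
Proof.
move=> pA; rewrite is_spokeE => /existsP [[i l] /eqP ->].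
rewrite /edge shift0 imset_set2 /=.
set u := (true, i, l); set v := (false, i, ~~ l) => p_not_spoke.
have ncyc_p a b : ncyc [set p a; p b] = ncyc [set a; b].
  by rewrite -imset_set2 ncycles_through_aut.
have adj_p a b : dgp_adj k (p a) (p b) = dgp_adj k a b by rewrite Aut_DGP_adj.
have uv : spoke_adj u v by rewrite /spoke_adj /= !eqxx.
have c_uv := ncyc_p u v; rewrite (ncycles_through_class is_spokeE uv) in c_uv.
have := adj_p u v; rewrite /dgp_adj uv orbT => /or3P [puv | puv | puv].
- set w := (false, shift i k, l).
  have vw : inner_adj k v w by rewrite /inner_adj /vidx /= shiftE negbK !eqxx.
  have := @ncycles_through_at_outer_vertex (p v) (p w).
  rewrite adj_p ncyc_p (ncycles_through_class (is_inner_edgeE k) vw) /dgp_adj vw !orbT.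
  have /and4P [_ pv_outer _ _] := puv; move/(_ isT pv_outer).
  rewrite (ncycles_through_class is_outer_edgeE puv) in c_uv.
  by rewrite !inE -c_uv orbb => /eqP.
- by case/negP: p_not_spoke; apply: edge_of_set2.
- set w := (true, shift i 1, ~~ l).
  have uw : outer_adj u w by rewrite /outer_adj /vidx /= shiftE !eqxx.
  have := @ncycles_through_at_inner_vertex (p u) (p w).
  rewrite adj_p ncyc_p (ncycles_through_class is_outer_edgeE uw) /dgp_adj uw.
  have /and4P [pu_inner _ _ _] := puv; move/(_ isT pu_inner).
  rewrite (ncycles_through_class (is_inner_edgeE k) puv) in c_uv.
  by rewrite !inE c_uv orbb => /eqP.
Qed.

Lemma sum_cycle_class_sizes (P : pred {set V n}) b b' d :
  (forall e, P e = [exists p, e == edge b b' d p]) -> (b != b') || ~~ (n %| d.*2) ->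
  \sum_(C in cycles n k j) #|[set e in C | P e]|
    = #|{: 'I_n * bool}| * ncyc (edge b b' d (ord0, false)).
Proof.
move=> PE nondeg; rewrite sum_card_incidence (sum_range_inj _ (edge_inj nondeg)) //.
by rewrite -sum_nat_const; apply: eq_bigr => q _; apply: ncycles_through_edge.
Qed.

End ClassCounts.
End EdgeClasses.

Theorem lemma5p7 (n k : nat) :
  1 <= k -> k.*2 < n -> Aut_DGP n k != B_DGP n k ->
  forall j : nat, 3 <= j -> R_ n k j = S_ n k j /\ S_ n k j = T_ n k j.
Proof.
case: n => [|N] // k_gt0 k2_lt_n A_neq_B j _.
have [p pA [e spoke_e moved]] := Aut_DGP_moves_spoke A_neq_B.
have [c_OS c_SI] := class_counts_eq_of_moved_spoke j pA spoke_e moved.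
have n_ndvd_2 : ~~ (N.+1 %| 1.*2).
  by rewrite gtnNdvd // (leq_ltn_trans _ k2_lt_n) // leq_double.
have n_ndvd_2k : ~~ (N.+1 %| k.*2) by rewrite gtnNdvd // double_gt0.
rewrite /R_ /S_ /T_ /r_of /s_of /t_of.
rewrite (sum_cycle_class_sizes k j (@is_outer_edgeE N)) ?n_ndvd_2 ?orbT //.
rewrite (sum_cycle_class_sizes k j (@is_spokeE N)) //.
rewrite (sum_cycle_class_sizes k j (@is_inner_edgeE N k)) ?n_ndvd_2k ?orbT //.
by rewrite c_OS c_SI.
Qed.
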